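(* Let $\mathcal{L}$ be a nonempty set, let $\langle \mathcal{M}, \models, f\rangle$ be an fC-model for $\mathcal{L}$, and define $\mathcal{C}: 2^{\mathcal{L}} \to 2^{\mathcal{L}}$ by $\mathcal{C}(A) = \overline{f(\widehat{A})}$ for all $A \subseteq \mathcal{L}$. Then $\mathcal{C}$ is a C-logics, i.e. it satisfies Inclusion ($A \subseteq \mathcal{C}(A)$ for all $A\subseteq\mathcal{L}$) and Cumulativity (for all $A, B \subseteq \mathcal{L}$, $A \subseteq B \subseteq \mathcal{C}(A)$ implies $\mathcal{C}(A) = \mathcal{C}(B)$).
   Context: $\mathcal{L}$ is an arbitrary nonempty set (of ''propositions''), with no structure assumed. An fC-model for $\mathcal{L}$ is a triple $\langle \mathcal{M}, \models, f\rangle$ where $\mathcal{M}$ is any set, $\models \subseteq \mathcal{M}\times\mathcal{L}$ is any binary relation, and $f: 2^{\mathcal{M}} \to 2^{\mathcal{M}}$ is a function defined on all subsets of $\mathcal{M}$ satisfying, for all $X, Y \subseteq \mathcal{M}$: Contraction $f(X) \subseteq X$, and Local Cumulativity: $f(X) \subseteq Y \subseteq X \Rightarrow f(Y) = f(X)$. For $A \subseteq \mathcal{L}$, $\widehat{A} = \{x \in \mathcal{M} : x \models a \text{ for all } a \in A\}$; for $X \subseteq \mathcal{M}$, $\overline{X} = \{a \in \mathcal{L} : x \models a \text{ for all } x \in X\}$. *)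

Definition subset {X : Type} (A B : X -> Prop) : Prop := forall x, A x -> B x.
Definition set_eq {X : Type} (A B : X -> Prop) : Prop := forall x, A x <-> B x.

Definition contraction {M : Type} (f : (M -> Prop) -> (M -> Prop)) : Prop :=
  forall X : M -> Prop, subset (f X) X.
Definition local_cumulativity {M : Type} (f : (M -> Prop) -> (M -> Prop)) : Prop :=
  forall X Y : M -> Prop, subset (f X) Y -> subset Y X -> set_eq (f Y) (f X).
Definition fC_model {L M : Type} (sat : M -> L -> Prop)
  (f : (M -> Prop) -> (M -> Prop)) : Prop :=
  contraction f /\ local_cumulativity f.

Definition hat {L M : Type} (sat : M -> L -> Prop) (A : L -> Prop) : M -> Prop :=
  fun x => forall a, A a -> sat x a.
Definition bar {L M : Type} (sat : M -> L -> Prop) (X : M -> Prop) : L -> Prop :=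
  fun a => forall x, X x -> sat x a.

Definition induced_C {L M : Type} (sat : M -> L -> Prop)
  (f : (M -> Prop) -> (M -> Prop)) (A : L -> Prop) : L -> Prop :=
  bar sat (f (hat sat A)).

Definition C_logic {L : Type} (C : (L -> Prop) -> (L -> Prop)) : Prop :=
  (forall A, subset A (C A)) /\
  (forall A B, subset A B -> subset B (C A) -> set_eq (C A) (C B)).


(* [hat] and [bar] form an antitone Galois connection between sets of
   formulas and sets of models.  Inclusion follows from [A ⊆ bar (hat A)]
   and Contraction.  For Cumulativity, [B ⊆ C(A)] transposes to
   [f (hat A) ⊆ hat B ⊆ hat A], so Local Cumulativity gives
   [f (hat B) = f (hat A)], and hence [C(B) = C(A)]. *)

Section GaloisConnection.

Context {L M : Type} (sat : M -> L -> Prop).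

Lemma hat_antitone {A B : L -> Prop} :
  subset A B -> subset (hat sat B) (hat sat A).
Proof. intros HAB x Hx a Ha. exact (Hx a (HAB a Ha)). Qed.

Lemma bar_antitone {X Y : M -> Prop} :
  subset X Y -> subset (bar sat Y) (bar sat X).
Proof. intros HXY a Ha x Hx. exact (Ha x (HXY x Hx)). Qed.

Lemma subset_hat_of_subset_bar {A : L -> Prop} {X : M -> Prop} :
  subset A (bar sat X) -> subset X (hat sat A).
Proof. intros HA x Hx a Ha. exact (HA a Ha x Hx). Qed.

Lemma subset_bar_hat (A : L -> Prop) : subset A (bar sat (hat sat A)).
Proof. intros a Ha x Hx. exact (Hx a Ha). Qed.

Lemma bar_set_eq {X Y : M -> Prop} : set_eq X Y -> set_eq (bar sat X) (bar sat Y).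
Proof.
  intros HXY a; split; apply bar_antitone; intros x; apply HXY.
Qed.

End GaloisConnection.

Section InducedClosure.

Context {L M : Type} (sat : M -> L -> Prop) (f : (M -> Prop) -> (M -> Prop)).

Lemma induced_C_inclusion :
  contraction f -> forall A : L -> Prop, subset A (induced_C sat f A).
Proof.
  intros Hcontr A a Ha.
  apply (bar_antitone sat (Hcontr (hat sat A))).
  exact (subset_bar_hat sat A a Ha).
Qed.

Lemma induced_C_cumulativity :
  local_cumulativity f -> forall A B : L -> Prop,
  subset A B -> subset B (induced_C sat f A) ->
  set_eq (induced_C sat f A) (induced_C sat f B).
Proof.
  intros Hcum A B HAB HBC.
  assert (Hf : set_eq (f (hat sat B)) (f (hat sat A))).
  { apply Hcum.
    - exact (subset_hat_of_subset_bar sat HBC).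
    - exact (hat_antitone sat HAB). }
  intros a; split; apply (bar_set_eq sat Hf a).
Qed.

End InducedClosure.

Theorem theorem1 (L : Type) (HL : inhabited L) (M : Type)
  (sat : M -> L -> Prop) (f : (M -> Prop) -> (M -> Prop)) :
  fC_model sat f -> C_logic (induced_C sat f).
Proof.
  intros [Hcontr Hcum]. split.
  - exact (induced_C_inclusion sat f Hcontr).
  - exact (induced_C_cumulativity sat f Hcum).
Qed.
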